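(* Let $G=\langle a,b,c,t \mid tat^{-1}=a,\ tbt^{-1}=ba,\ tct^{-1}=ca^2\rangle$ be Gersten's free-by-cyclic group. Then for every field $\mathbb{F}$ of positive characteristic and every $d\ge 1$, there is no injective homomorphism $G\to GL(d,\mathbb{F})$.
   Context: $G$ is the semidirect product $F_3\rtimes_\alpha\mathbb{Z}$ where $F_3$ is free on $a,b,c$ and $\alpha(a)=a$, $\alpha(b)=ba$, $\alpha(c)=ca^2$. *)

(* Gersten's group G = F_3 ⋊_alpha Z, built concretely:
   elements are pairs (w, n) with w a freely reduced word in a,b,c
   (representing w * t^n), with (w,m)(v,n) = (w * alpha^m(v), m+n),
   so that t w t^-1 = alpha(w). *)
From HB Require Import structures.
From mathcomp Require Import all_boot all_order all_algebra.
Set Implicit Arguments. Unset Strict Implicit. Unset Printing Implicit Defensive.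
Import Order.TTheory GRing.Theory Num.Theory.

(* a letter: generator index (0=a,1=b,2=c) and a flag (true = inverse) *)
Definition letter := ('I_3 * bool)%type.
Definition linv (x : letter) : letter := (x.1, ~~ x.2).

Definition fstep (x : letter) (acc : seq letter) : seq letter :=
  match acc with
  | y :: acc' => if y == linv x then acc' else x :: acc
  | [::] => [:: x]
  end.
Definition fred (w : seq letter) : seq letter := foldr fstep [::] w.

Definition reduced (w : seq letter) : bool := sorted (fun x y => y != linv x) w.

Lemma fred_reduced w : reduced (fred w).
Proof.
elim: w => [|x w IH] //=.
rewrite /fstep; case E: (fred w) IH => [|y acc] //= H.
case: ifP => Hy; first by case: acc {E} H => //= z acc /andP[].
by rewrite /= Hy H.
Qed.

Definition gen (i : 'I_3) (inv : bool) : letter := (i, inv).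
Definition a_ : 'I_3 := @Ordinal 3 0 isT.
Definition b_ : 'I_3 := @Ordinal 3 1 isT.
Definition c_ : 'I_3 := @Ordinal 3 2 isT.

Definition word_inv (w : seq letter) : seq letter := rev (map linv w).

Definition alpha_gen (i : 'I_3) : seq letter :=
  if val i == 0 then [:: (a_, false)]
  else if val i == 1 then [:: (b_, false); (a_, false)]
  else [:: (c_, false); (a_, false); (a_, false)].
Definition alphainv_gen (i : 'I_3) : seq letter :=
  if val i == 0 then [:: (a_, false)]
  else if val i == 1 then [:: (b_, false); (a_, true)]
  else [:: (c_, false); (a_, true); (a_, true)].

Definition subst (img : 'I_3 -> seq letter) (w : seq letter) : seq letter :=
  fred (flatten (map (fun x : letter => if x.2 then word_inv (img x.1) else img x.1) w)).

Definition alpha_pow (n : int) (w : seq letter) : seq letter :=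
  match n with
  | Posz k => iter k (subst alpha_gen) w
  | Negz k => iter k.+1 (subst alphainv_gen) w
  end.

Definition G := {p : seq letter * int | reduced p.1}.

Definition gmul (g h : G) : G :=
  exist (fun p : seq letter * int => reduced p.1)
    (fred ((val g).1 ++ alpha_pow (val g).2 (val h).1), ((val g).2 + (val h).2)%R)
    (fred_reduced _).

Definition GL_hom (F : fieldType) (d : nat) (phi : G -> 'M[F]_d) : Prop :=
  (forall g, phi g \in unitmx) /\ (forall g h, phi (gmul g h) = (phi g *m phi h)%R).

(* Let A, T, B, C be the images of a, t, b, c. The relations say that A commutes with T
   and that B and C conjugate A T and A^2 T to T. Over a splitting field A and T are
   simultaneously triangularizable; if a_i and t_i are their diagonal entries, comparing
   characteristic polynomials yields permutations s, r with a_i t_i = t_(s i) and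
   a_i^2 t_i = t_(r i), hence t_(s i)^2 = t_i t_(r i). Over Q the system
   2 x_(s i) = x_i + x_(r i) forces x_(s i) = x_i (sum the squares of both sides), so the
   rows of P_s - 1 are rational combinations of those of 2 P_s - 1 - P_r, and integral
   ones after scaling by some D > 0. Read multiplicatively this gives t_(s i)^D = t_i^D,
   i.e. a_i^D = 1. Thus A^D is unipotent and, in characteristic p, A^(D p^d) = 1, whereas
   a has infinite order in G. *)

From mathcomp Require Import all_boot all_fingroup all_algebra all_field.
From mathcomp Require Import ring lra.
From Stdlib Require Import Classical.
Set Implicit Arguments. Unset Strict Implicit. Unset Printing Implicit Defensive.
Import GRing.Theory Num.Theory.
Local Open Scope ring_scope.

Lemma rat_mx_clear_denominators m n (X : 'M[rat]_(m, n)) :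
  exists2 D, (0 < D)%N & exists Y : 'M[int]_(m, n), map_mx intr Y = D%:R *: X.
Proof.
pose den (ij : 'I_m * 'I_n) := `|denq (X ij.1 ij.2)|%N.
exists (\prod_ij den ij)%N; first by rewrite prodn_gt0 // => ij; rewrite absz_gt0 denq_neq0.
exists (\matrix_(i, j) (numq (X i j) * (\prod_(ij | ij != (i, j)) den ij)%N%:Z)).
apply/matrixP => i j; rewrite !mxE [in RHS](bigD1 (i, j)) //= intrM numqE.
by rewrite natrM [RHS]mulrC mulrA /den -(absz_denq (X i j)).
Qed.

Lemma prodr_exprz (F : fieldType) (I : Type) (r : seq I) (g : I -> F) (z : int) :
  (forall i, g i != 0) -> \prod_(i <- r) g i ^ z = (\prod_(i <- r) g i) ^ z.
Proof.
move=> g_neq0; elim: r => [|i r IHr]; first by rewrite !big_nil exp1rz.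
rewrite !big_cons IHr exprzMl ?unitfE //.
by elim/big_rec: _ => [|j x _ x_neq0]; rewrite ?oner_neq0 // mulf_neq0.
Qed.

Section Monomial.
Variables (F : fieldType) (d : nat) (f : 'I_d -> F).
Hypothesis f_neq0 : forall i, f i != 0.

Definition monomial (c : 'rV[int]_d) : F := \prod_j f j ^ c 0 j.

Lemma monomialD c1 c2 : monomial (c1 + c2) = monomial c1 * monomial c2.
Proof. by rewrite -big_split; apply: eq_bigr => j _; rewrite mxE exprzDr ?unitfE. Qed.

Lemma monomialZ z c : monomial (z *: c) = monomial c ^ z.
Proof.
rewrite /monomial -prodr_exprz => [|j]; last exact: expfz_neq0.
by apply: eq_bigr => j _; rewrite mxE exprz_exp mulrC.
Qed.

Lemma monomialB c1 c2 : monomial (c1 - c2) = monomial c1 / monomial c2.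
Proof. by rewrite monomialD -scaleN1r monomialZ exprN1. Qed.

Lemma monomial_sum (I : finType) (c : I -> 'rV_d) :
  monomial (\sum_i c i) = \prod_i monomial (c i).
Proof.
apply: (big_morph monomial monomialD).
by rewrite /monomial big1 // => j _; rewrite mxE expr0z.
Qed.

Lemma monomial_perm_row (t : 'S_d) k : monomial (row k (perm_mx t)) = f (t k).
Proof.
rewrite /monomial (bigD1 (t k)) //= big1 => [|j tk_j]; rewrite !mxE.
  by rewrite eqxx expr1z mulr1.
by rewrite eq_sym (negbTE tk_j) expr0z.
Qed.

Lemma monomial_row1 k : monomial (row k 1%:M) = f k.
Proof. by rewrite -perm_mx1 monomial_perm_row perm1. Qed.
End Monomial.

Section PermMidpoint.
Variables (d : nat) (s r : 'S_d).

Definition midpoint_mx (R : pzRingType) : 'M[R]_d := perm_mx s *+ 2 - 1 - perm_mx r.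
Definition shift_mx (R : pzRingType) : 'M[R]_d := perm_mx s - 1.

Lemma map_midpoint_mx (R S : pzRingType) (f : {rmorphism R -> S}) :
  map_mx f (midpoint_mx R) = midpoint_mx S.
Proof. by rewrite /midpoint_mx !mulr2n !map_mxB map_mxD map_mx1 !map_perm_mx. Qed.

Lemma map_shift_mx (R S : pzRingType) (f : {rmorphism R -> S}) :
  map_mx f (shift_mx R) = shift_mx S.
Proof. by rewrite /shift_mx map_mxB map_mx1 map_perm_mx. Qed.

Lemma perm_midpoint_fixed (R : realFieldType) (x : 'I_d -> R) :
  (forall i, x (s i) *+ 2 = x i + x (r i)) -> forall i, x (s i) = x i.
Proof.
move=> mid; pose S := \sum_i x i ^+ 2; pose P := \sum_i x i * x (r i).
have sum_perm (t : 'S_d) : \sum_i x (t i) ^+ 2 = S.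
  exact/esym/(reindex_inj (@perm_inj _ t)).
have PS : P = S.
  have : \sum_i (x (s i) *+ 2) ^+ 2 = \sum_i (x i + x (r i)) ^+ 2.
    by apply: eq_bigr => i _; rewrite mid.
  have -> : \sum_i (x (s i) *+ 2) ^+ 2 = S *+ 4.
    by rewrite -(sum_perm s) -sumrMnl; apply: eq_bigr => i _; ring.
  have -> : \sum_i (x i + x (r i)) ^+ 2 = S + S + P *+ 2.
    by rewrite -{2}(sum_perm r) /S /P -sumrMnl -!big_split; apply: eq_bigr => i _ /=; ring.
  by move=> h; lra.
have sq0 : \sum_i (x i - x (r i)) ^+ 2 = 0.
  have -> : \sum_i (x i - x (r i)) ^+ 2 = S + S - P *+ 2.
    by rewrite -{2}(sum_perm r) /S /P -sumrMnl -big_split -sumrB; apply: eq_bigr => i _ /=; ring.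
  by rewrite PS; lra.
have xr i : x (r i) = x i.
  move/eqP: sq0; rewrite psumr_eq0 => [/allP/(_ i (mem_index_enum _))|j _]; last first.
    exact: sqr_ge0.
  by rewrite /= sqrf_eq0 subr_eq0 => /eqP.
by move=> i; have := mid i; rewrite xr => h; lra.
Qed.

Lemma shift_mx_sub_midpoint (R : realFieldType) : (shift_mx R <= midpoint_mx R)%MS.
Proof.
rewrite submxE; set C := cokermx _; have MC : midpoint_mx R *m C = 0 := mulmx_coker _.
clearbody C; apply/eqP/matrixP => i j; rewrite [RHS]mxE.
have mid k : C (s k) j *+ 2 = C k j + C (r k) j.
  move/matrixP: MC => /(_ k j).
  by rewrite /midpoint_mx mulr2n !mulmxBl mulmxDl mul1mx -!row_permE !mxE => h; lra.
rewrite /shift_mx mulmxBl mul1mx -row_permE !mxE.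
by rewrite (perm_midpoint_fixed (x := fun k => C k j) mid) subrr.
Qed.

Lemma shift_mx_int_combination :
  exists2 D, (0 < D)%N & exists Y : 'M[int]_d, D%:Z *: shift_mx int = Y *m midpoint_mx int.
Proof.
have /submxP [X shiftX] := shift_mx_sub_midpoint rat.
have [D D_gt0 [Y YX]] := rat_mx_clear_denominators X.
exists D => //; exists Y; apply/matrixP => i j; apply: (@intr_inj rat).
have /matrixP/(_ i j) :
    map_mx intr (D%:Z *: shift_mx int) = map_mx intr (Y *m midpoint_mx int) :> 'M[rat]_d.
  by rewrite map_mxZ map_mxM YX map_shift_mx map_midpoint_mx shiftX scalemxAl.
by rewrite !mxE.
Qed.

Lemma perm_midpoint_torsion (F : fieldType) (f : 'I_d -> F) :
  (forall i, f i != 0) -> (forall i, f (s i) ^+ 2 = f i * f (r i)) ->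
  exists2 D, (0 < D)%N & forall i, f (s i) ^+ D = f i ^+ D.
Proof.
move=> f_neq0 mid; have [D D_gt0 [Y shiftY]] := shift_mx_int_combination.
exists D => // i.
have midpoint_row k : monomial f (row k (midpoint_mx int)) = 1.
  rewrite /midpoint_mx mulr2n !linearB linearD /= !monomialB ?monomialD //.
  rewrite !monomial_perm_row ?monomial_row1 // -expr2 mid.
  by rewrite [f k * _]mulrC mulrK ?unitfE // divff.
have : monomial f (row i (D%:Z *: shift_mx int)) = 1.
  rewrite shiftY row_mul mulmx_sum_row monomial_sum //.
  by apply: big1 => k _; rewrite monomialZ // midpoint_row exp1rz.
rewrite linearZ monomialZ // /shift_mx linearB monomialB // monomial_perm_row //.
by rewrite monomial_row1 // -exprnP expr_div_n => /divr1_eq.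
Qed.
End PermMidpoint.

Lemma irreducible_dvdp_exists (F : fieldType) (q : {poly F}) :
  (1 < size q)%N -> exists2 r, r %| q & irreducible_poly r.
Proof.
elim: {q}_.+1 {-2}q (ltnSn (size q)) => // m IHm q size_q q_gt1.
have [q_irr|q_red] := classic (irreducible_poly q); first by exists q.
have : ~ forall r : {poly F}, size r != 1 -> r %| q -> r %= q by move=> q_irr; apply: q_red.
move/not_all_ex_not => [r /not_all_ex_not [r_neq1 /not_all_ex_not [r_dvd r_neqq]]].
have q_neq0 : q != 0 by rewrite -size_poly_gt0 ltnW.
have r_neq0 : r != 0 by apply: contraTneq r_dvd => ->; rewrite dvd0p.
have r_lt : (size r < size q)%N.
  by rewrite ltn_neqAle dvdp_leq // andbT dvdp_size_eqp //; apply/negP.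
have r_gt1 : (1 < size r)%N by rewrite ltn_neqAle eq_sym r_neq1 size_poly_gt0.
have [r' r'_dvd r'_irr] := IHm r (leq_trans r_lt size_q) r_gt1.
by exists r' => //; apply: dvdp_trans r_dvd.
Qed.

Lemma splitting_field_exists (F : fieldType) (q : {poly F}) : q \is monic ->
  exists (E : fieldType) (f : {rmorphism F -> E}) (rs : seq E),
    map_poly f q = \prod_(z <- rs) ('X - z%:P).
Proof.
move: {2}(size q).+1 (ltnSn (size q)) => m.
elim: m F q => // m IHm F q size_q q_monic.
have [q_le1|q_gt1] := leqP (size q) 1.
  exists F, idfun, [::]; rewrite big_nil map_poly_id //.
  by apply/eqP; rewrite -eqp_monic ?monic1 // -size_poly_eq1 eqn_leq q_le1 size_poly_gt0 monic_neq0.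
have [r r_dvd [r_gt1 r_irr]] := irreducible_dvdp_exists q_gt1.
have [K _ [x rx _]] := irredp_FAdjoin (conj r_gt1 r_irr).
have : root (map_poly (in_alg K) q) x.
  by case/dvdpP: r_dvd => q' ->; rewrite rmorphM rootM rx orbT.
case/factor_theorem => q1 qK.
have q1_monic : q1 \is monic.
  by rewrite -(monicMr _ (monicXsubC x)) -qK map_monic.
have size_q1 : (size q1 < m)%N.
  have : size (map_poly (in_alg K) q) = size (q1 * ('X - x%:P)) by rewrite qK.
  rewrite size_map_poly size_Mmonic ?monicXsubC ?monic_neq0 // size_XsubC addn2.
  by move=> /= size_qq1; rewrite -ltnS -size_qq1.
have [E [g [rs q1E]]] := IHm _ q1 size_q1 q1_monic.
exists E, (g \o in_alg K), (g x :: rs).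
by rewrite map_poly_comp qK rmorphM /= q1E big_cons mulrC rmorphB /= map_polyX map_polyC.
Qed.

Section BlockLower.
Variables (R : pzRingType) (m n : nat).
Implicit Types M N : 'M[R]_(m + n).

Lemma block_lower_mul M N : ursubmx M = 0 -> ursubmx N = 0 ->
  ursubmx (M *m N) = 0 /\ drsubmx (M *m N) = drsubmx M *m drsubmx N.
Proof.
move=> M0 N0; rewrite -(submxK M) -(submxK N) M0 N0 mulmx_block.
by rewrite !block_mxKur !block_mxKdr !mul0mx !mulmx0 !addr0 add0r.
Qed.

Lemma block_lower_prod_subC M (rs : seq R) : ursubmx M = 0 ->
  ursubmx (\prod_(z <- rs) (M - z%:M)) = 0 /\
  drsubmx (\prod_(z <- rs) (M - z%:M)) = \prod_(z <- rs) (drsubmx M - z%:M).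
Proof.
move=> M0; elim: rs => [|z rs [IH0 IH]].
  by rewrite !big_nil -[1]/(1%:M) (scalar_mx_block m n 1) block_mxKur block_mxKdr.
have Mz0 : ursubmx (M - z%:M) = 0.
  by rewrite -M0; apply/matrixP => i j; rewrite !mxE eq_shift mulr0n subr0.
have [prod0 prodE] := block_lower_mul Mz0 IH0; rewrite !mulmxE in prod0 prodE.
rewrite !big_cons prod0 prodE IH; split => //; congr (_ * _).
by apply/matrixP => i j; rewrite !mxE eq_shift.
Qed.
End BlockLower.

Section Cotrigonalization.
Variable E : fieldType.

Lemma conjumxM n (P M N : 'M[E]_n) : P \in unitmx ->
  conjmx P (M *m N) = conjmx P M *m conjmx P N.
Proof. by move=> Pu; rewrite conjmxM // inE stablemx_unit. Qed.

Lemma conjumx_prod_subC n (P M : 'M[E]_n) rs : P \in unitmx ->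
  conjmx P (\prod_(z <- rs) (M - z%:M)) = \prod_(z <- rs) (conjmx P M - z%:M).
Proof.
move=> Pu; have Pfree : row_free P by rewrite row_free_unit.
elim: rs => [|z rs IH]; first by rewrite !big_nil; exact: conjmx_scalar.
rewrite !big_cons -!mulmxE conjumxM // IH; congr (_ *m _).
by rewrite /conjmx mulmxBr mulmxBl -[P *m z%:M *m _]/(conjmx P z%:M) conjmx_scalar.
Qed.

Lemma stable_eigenvector n (T U : 'M[E]_n) (w : 'rV_n) rs :
  stablemx U T -> (w <= U)%MS -> w != 0 -> w *m \prod_(z <- rs) (T - z%:M) = 0 ->
  exists b (v : 'rV_n), [/\ v != 0, (v <= U)%MS & (v <= eigenspace T b)%MS].
Proof.
move=> UT; elim: rs w => [|z rs IH] w wU w_neq0.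
  by rewrite big_nil mulmx1 => w0; rewrite w0 eqxx in w_neq0.
rewrite big_cons -mulmxE mulmxA.
have [wTz0 _|wTz_neq0] := eqVneq (w *m (T - z%:M)) 0.
  exists z, w; split=> //; apply/eigenspaceP/eqP.
  by rewrite -subr_eq0 -mul_mx_scalar -mulmxBr wTz0.
apply: IH wTz_neq0; rewrite mulmxBr mul_mx_scalar addmx_sub ?eqmx_opp ?scalemx_sub //.
exact: submx_trans (submxMr T wU) UT.
Qed.

Lemma common_eigenvector n (A T : 'M[E]_n.+1) rs : comm_mx A T ->
  \prod_(z <- rs) (A - z%:M) = 0 -> \prod_(z <- rs) (T - z%:M) = 0 ->
  exists a b (v : 'rV_n.+1),
    [/\ v != 0, (v <= eigenspace A a)%MS & (v <= eigenspace T b)%MS].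
Proof.
move=> cAT pA pT; pose w : 'rV[E]_n.+1 := delta_mx 0 0.
have w_neq0 : w != 0.
  by apply/eqP => /matrixP/(_ 0 0)/eqP; rewrite !mxE eqxx oner_eq0.
have killed (u : 'rV_n.+1) M : \prod_(z <- rs) (M - z%:M) = 0 ->
  u *m \prod_(z <- rs) (M - z%:M) = 0 by move->; rewrite mulmx0.
have [a [u [u_neq0 _ uA]]] :=
  stable_eigenvector (T := A) (submx1 _) (submx1 w) w_neq0 (killed w _ pA).
have [b [v [v_neq0 vA vT]]] :=
  stable_eigenvector (comm_mx_stable_eigenspace a cAT) uA u_neq0 (killed u _ pT).
by exists a, b, v.
Qed.

Lemma top_row_ebase_sub n (v : 'rV[E]_(1 + n)) : v != 0 ->
  ((pid_mx 1 : 'M_(1, 1 + n)) *m row_ebase v <= v)%MS.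
Proof.
move=> v_neq0; have := mulmx_ebase v; rewrite rank_rV v_neq0 => vE.
have -> : (pid_mx 1 : 'M_(1, 1 + n)) *m row_ebase v = invmx (col_ebase v) *m v.
  by rewrite -[X in invmx _ *m X]vE !mulmxA mulVmx ?col_ebase_unit // mul1mx.
exact: submxMl.
Qed.

Lemma ursubmx_conj_eigen n (U M : 'M[E]_(1 + n)) a : U \in unitmx ->
  ((pid_mx 1 : 'M_(1, 1 + n)) *m U <= eigenspace M a)%MS -> ursubmx (conjmx U M) = 0.
Proof.
move=> Uu /eigenspaceP UM.
have : (pid_mx 1 : 'M_(1, 1 + n)) *m conjmx U M = a *: pid_mx 1.
  by rewrite conjumx // !mulmxA UM -scalemxAl mulmxK.
rewrite -{1}(submxK (conjmx U M)) pid_mx_row mul_row_block scale_row_mx.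
by case/eq_row_mx => _; rewrite mul1mx mul0mx addr0 scaler0.
Qed.

Lemma trig_conj_block n (U M : 'M[E]_(1 + n)) (Q : 'M[E]_n) :
  U \in unitmx -> Q \in unitmx -> ursubmx (conjmx U M) = 0 ->
  is_trig_mx (conjmx Q (drsubmx (conjmx U M))) ->
  is_trig_mx (conjmx (block_mx 1%:M 0 0 Q *m U) M).
Proof.
move=> Uu Qu M0 trigQ.
have Bu : block_mx (1%:M : 'M_1) 0 0 Q \in unitmx by rewrite block_diag_mx_unit unitmx1.
rewrite conjuMumx // -(submxK (conjmx U M)) M0 conjumx // invmx_block_diag // invmx1.
rewrite !mulmx_block !(mul1mx, mul0mx, mulmx0, mulmx1, addr0, add0r).
by rewrite is_trig_block_mx // eqxx mx11_is_trig -conjumx.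
Qed.

Lemma comm_split_cotrigonalizable n (A T : 'M[E]_n) rs : comm_mx A T ->
  \prod_(z <- rs) (A - z%:M) = 0 -> \prod_(z <- rs) (T - z%:M) = 0 ->
  cotrigonalizable [:: A; T].
Proof.
elim: n A T => [|n IHn] A T cAT pA pT.
  by exists 1%:M; rewrite ?unitmx1 //= !andbT; apply/andP; split; apply/is_trig_mxP => -[].
have [a [b [v [v_neq0 vA vT]]]] := common_eigenvector cAT pA pT.
pose U : 'M_(1 + n) := row_ebase v; have Uu : U \in unitmx := row_ebase_unit v.
have A0 : ursubmx (conjmx U A) = 0.
  exact: ursubmx_conj_eigen Uu (submx_trans (top_row_ebase_sub v_neq0) vA).
have T0 : ursubmx (conjmx U T) = 0.
  exact: ursubmx_conj_eigen Uu (submx_trans (top_row_ebase_sub v_neq0) vT).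
have cAT' : comm_mx (drsubmx (conjmx U A)) (drsubmx (conjmx U T)).
  rewrite /comm_mx; have [_ <-] := block_lower_mul A0 T0; have [_ <-] := block_lower_mul T0 A0.
  by rewrite -!conjumxM // cAT.
have lower_split M : ursubmx (conjmx U M) = 0 -> \prod_(z <- rs) (M - z%:M) = 0 ->
    \prod_(z <- rs) (drsubmx (conjmx U M) - z%:M) = 0.
  move=> M0 pM; have [_ <-] := block_lower_prod_subC rs M0.
  by rewrite -conjumx_prod_subC // pM conjmx0; apply/matrixP => i j; rewrite !mxE.
have [Q Qu /and3P[QA QT _]] := IHn _ _ cAT' (lower_split _ A0 pA) (lower_split _ T0 pT).
have Bu : (block_mx (1%:M : 'M_1) 0 0 Q : 'M_(1 + n)) \in unitmx.
  by rewrite block_diag_mx_unit unitmx1.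
exists (block_mx 1%:M 0 0 Q *m U); first by rewrite unitmx_mul; apply/andP.
by rewrite /= andbT; apply/andP; split; apply: trig_conj_block.
Qed.
End Cotrigonalization.

Section TrigMul.
Variables (R : pzSemiRingType) (n : nat) (U V : 'M[R]_n).
Hypotheses (U_trig : is_trig_mx U) (V_trig : is_trig_mx V).

Lemma trig_mxM : is_trig_mx (U *m V).
Proof.
move/is_trig_mxP: U_trig => U0; move/is_trig_mxP: V_trig => V0.
apply/is_trig_mxP => i j lt_ij; rewrite mxE big1 // => k _.
have [lt_ik|le_ki] := ltnP i k; first by rewrite U0 // mul0r.
by rewrite V0 ?mulr0 // (leq_ltn_trans le_ki lt_ij).
Qed.

Lemma trig_mxM_diag i : (U *m V) i i = U i i * V i i.
Proof.
move/is_trig_mxP: U_trig => U0; move/is_trig_mxP: V_trig => V0.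
rewrite mxE (bigD1 i) //= big1 ?addr0 // => k k_neq_i.
have [lt_ik|le_ki] := ltnP i k; first by rewrite U0 // mul0r.
by rewrite V0 ?mulr0 // ltn_neqAle le_ki andbT; apply: contra k_neq_i => /eqP/val_inj ->.
Qed.
End TrigMul.

Lemma char_poly_conjmx (E : fieldType) n (P M : 'M[E]_n) : P \in unitmx ->
  char_poly (conjmx P M) = char_poly M.
Proof.
move=> Pu; rewrite conjumx // /char_poly /char_poly_mx !map_mxM map_invmx.
set Q := map_mx polyC P; have Qu : Q \in unitmx by rewrite map_unitmx.
have -> : 'X%:M - Q *m map_mx polyC M *m invmx Q = Q *m ('X%:M - map_mx polyC M) *m invmx Q.
  by rewrite mulmxBr mulmxBl mul_mx_scalar -scalemxAl mulmxV // scalemx1.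
by rewrite !det_mulmx mulrAC -det_mulmx mulmxV // det1 mul1r.
Qed.

Lemma char_poly_similar (F : fieldType) n (P X Y : 'M[F]_n) :
  P \in unitmx -> P *m X = Y *m P -> char_poly X = char_poly Y.
Proof.
by move=> Pu PXY; rewrite -(char_poly_conjmx X Pu) conjumx // PXY mulmxK.
Qed.

Lemma horner_mx_prod_XsubC (R : comNzRingType) n (M : 'M[R]_n.+1) (rs : seq R) :
  horner_mx M (\prod_(z <- rs) ('X - z%:P)) = \prod_(z <- rs) (M - z%:M).
Proof.
rewrite rmorph_prod; apply: eq_bigr => z _.
by rewrite rmorphB /= horner_mx_X horner_mx_C.
Qed.

Lemma prod_XsubC_perm (F : fieldType) m (f g : 'I_m -> F) :
  \prod_i ('X - (f i)%:P) = \prod_i ('X - (g i)%:P) -> exists s : 'S_m, forall i, f i = g (s i).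
Proof.
move=> fg; have : perm_eq [tuple f i | i < m] [tuple g i | i < m].
  apply: prod_XsubC_eq; rewrite !big_tuple.
  by under eq_bigr do rewrite tnth_mktuple; under [RHS]eq_bigr do rewrite tnth_mktuple.
case/tuple_permP => s fgs; exists s => i.
have : [tuple f i | i < m] = [tuple tnth [tuple g i | i < m] (s i) | i < m] by apply: val_inj.
by move/(congr1 (fun t => tnth t i)); rewrite !tnth_mktuple.
Qed.

Lemma trig_char_poly_perm (F : fieldType) m (X Y : 'M[F]_m) :
  is_trig_mx X -> is_trig_mx Y -> char_poly X = char_poly Y ->
  exists s : 'S_m, forall i, X i i = Y (s i) (s i).
Proof.
move=> X_trig Y_trig; rewrite !char_poly_trig // => XY.
exact: (prod_XsubC_perm (f := fun i => X i i) (g := fun i => Y i i)).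
Qed.

Lemma expr_subr1_pchar (R : comNzRingType) p (x : R) k : p \in [pchar R] ->
  (x - 1) ^+ (p ^ k)%N = x ^+ (p ^ k)%N - 1.
Proof.
move=> pR; have pk : [pchar R].-nat (p ^ k)%N.
  by rewrite pnatX (eq_pnat _ (pcharf_eq pR)) pnat_id ?(pcharf_prime pR) ?orbT.
by rewrite exprDn_pchar // exprNn_pchar // expr1n.
Qed.

Lemma char_poly_root1_pchar (F : fieldType) p n (A : 'M[F]_n.+1) (a : 'I_n.+1 -> F) D :
  p \in [pchar F] -> char_poly A = \prod_i ('X - (a i)%:P) -> (forall i, a i ^+ D = 1) ->
  A ^+ (D * p ^ n.+1) = 1.
Proof.
move=> pF cpA aD; have p_gt1 := prime_gt1 (pcharf_prime pF).
have : char_poly A %| ('X^D - 1) ^+ n.+1.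
  rewrite cpA -[X in _ ^+ X]card_ord -prodr_const.
  apply: (big_ind2 (fun q1 q2 => q1 %| q2)) => [|q1 q2 q3 q4|i _].
  - exact: dvdpp.
  - exact: dvdp_mul.
  - by rewrite dvdp_XsubCl /root !hornerE aD subrr.
move/dvdp_trans/(_ (dvdp_exp2l _ (ltnW (ltn_expl n.+1 p_gt1)))).
rewrite expr_subr1_pchar ?pchar_poly // -exprM => cpA_dvd.
have /mxminpoly_minP : mxminpoly A %| 'X^(D * p ^ n.+1) - 1.
  exact: dvdp_trans (mxminpoly_dvd_char A) cpA_dvd.
by rewrite rmorphB rmorphXn /= horner_mx_X rmorph1 => /eqP; rewrite subr_eq0 => /eqP.
Qed.

Lemma trig_shift_diag_root1 (F : fieldType) n (UA UT : 'M[F]_n) :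
  is_trig_mx UA -> is_trig_mx UT -> (forall i, UT i i != 0) ->
  char_poly (UA *m UT) = char_poly UT -> char_poly (UA *m UA *m UT) = char_poly UT ->
  exists2 D, (0 < D)%N & forall i, UA i i ^+ D = 1.
Proof.
move=> A_trig T_trig T_neq0 cpAT cpAAT.
have AA_trig := trig_mxM A_trig A_trig.
have [s sE] := trig_char_poly_perm (trig_mxM A_trig T_trig) T_trig cpAT.
have [r rE] := trig_char_poly_perm (trig_mxM AA_trig T_trig) T_trig cpAAT.
have mid i : UT (s i) (s i) ^+ 2 = UT i i * UT (r i) (r i).
  by rewrite -sE -rE !trig_mxM_diag //; ring.
have [D D_gt0 TD] := perm_midpoint_torsion (f := fun i => UT i i) T_neq0 mid.
exists D => // i; apply: (mulIf (expf_neq0 D (T_neq0 i))).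
by rewrite mul1r -exprMn -trig_mxM_diag // sE TD.
Qed.

Lemma split_shift_torsion (E : fieldType) p n (A T : 'M[E]_n.+1) rs :
  p \in [pchar E] -> T \in unitmx -> comm_mx A T ->
  char_poly (A *m T) = char_poly T -> char_poly (A *m A *m T) = char_poly T ->
  \prod_(z <- rs) (A - z%:M) = 0 -> \prod_(z <- rs) (T - z%:M) = 0 ->
  exists2 N, (0 < N)%N & A ^+ N = 1.
Proof.
move=> pE Tu cAT cpAT cpAAT pA pT.
have [P Pu /and3P[A_trig T_trig _]] := comm_split_cotrigonalizable cAT pA pT.
have cpP M : char_poly (conjmx P M) = char_poly M := char_poly_conjmx M Pu.
have PT_neq0 i : conjmx P T i i != 0.
  have : \det (conjmx P T) != 0.
    by rewrite -unitfE -unitmxE conjumx // !unitmx_mul Pu Tu unitmx_inv Pu.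
  rewrite det_trig //; apply: contraNneq => PTi0.
  by rewrite (bigD1 i) //= PTi0 mul0r.
have cpPAT : char_poly (conjmx P A *m conjmx P T) = char_poly (conjmx P T).
  by rewrite -conjumxM // !cpP.
have cpPAAT : char_poly (conjmx P A *m conjmx P A *m conjmx P T) = char_poly (conjmx P T).
  by rewrite -!conjumxM // !cpP.
have [D D_gt0 PAD] := trig_shift_diag_root1 A_trig T_trig PT_neq0 cpPAT cpPAAT.
exists (D * p ^ n.+1)%N; first by rewrite muln_gt0 D_gt0 expn_gt0 prime_gt0 // (pcharf_prime pE).
by apply: char_poly_root1_pchar pE _ PAD; rewrite -cpP char_poly_trig.
Qed.

Lemma char_poly_shift_torsion (F : fieldType) p n (A T : 'M[F]_n.+1) :
  p \in [pchar F] -> T \in unitmx -> comm_mx A T ->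
  char_poly (A *m T) = char_poly T -> char_poly (A *m A *m T) = char_poly T ->
  exists2 N, (0 < N)%N & A ^+ N = 1.
Proof.
move=> pF Tu cAT cpAT cpAAT.
have cpAT_monic : char_poly A * char_poly T \is monic by rewrite monicMl ?char_poly_monic.
have [E [f [rs fsplit]]] := splitting_field_exists cpAT_monic.
have cpf M : char_poly (map_mx f M) = map_poly f (char_poly M) by rewrite map_char_poly.
have fsplitE : \prod_(z <- rs) ('X - z%:P) = char_poly (map_mx f A) * char_poly (map_mx f T).
  by rewrite -fsplit rmorphM !cpf.
have [N N_gt0 fAN] : exists2 N, (0 < N)%N & map_mx f A ^+ N = 1.
  apply: (@split_shift_torsion E p n _ (map_mx f T) rs).
  - by rewrite (fmorph_pchar f).
  - by rewrite map_unitmx.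
  - by rewrite /comm_mx -!map_mxM cAT.
  - by rewrite -map_mxM !cpf cpAT.
  - by rewrite -!map_mxM !cpf cpAAT.
  - by rewrite -horner_mx_prod_XsubC fsplitE rmorphM /= Cayley_Hamilton mul0r.
  - by rewrite -horner_mx_prod_XsubC fsplitE rmorphM /= Cayley_Hamilton mulr0.
exists N => //; apply: (@map_mx_inj _ _ f).
by rewrite rmorphXn /= fAN map_mx1.
Qed.

Definition gword (w : seq letter) (n : int) (w_red : reduced w) : G :=
  exist (fun p : seq letter * int => reduced p.1) (w, n) w_red.

Definition g1 : G := @gword [::] 0 isT.
Definition gen_a : G := @gword [:: (a_, false)] 0 isT.
Definition gen_b : G := @gword [:: (b_, false)] 0 isT.
Definition gen_c : G := @gword [:: (c_, false)] 0 isT.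
Definition gen_t : G := @gword [::] 1 isT.

Lemma gmul_g1g1 : gmul g1 g1 = g1. Proof. exact/val_inj. Qed.

Lemma gersten_rel_a : gmul gen_t gen_a = gmul gen_a gen_t.
Proof. by apply: val_inj; vm_compute. Qed.

Lemma gersten_rel_b : gmul gen_t gen_b = gmul (gmul gen_b gen_a) gen_t.
Proof. by apply: val_inj; vm_compute. Qed.

Lemma gersten_rel_c : gmul gen_t gen_c = gmul (gmul (gmul gen_c gen_a) gen_a) gen_t.
Proof. by apply: val_inj; vm_compute. Qed.

Fixpoint gen_a_pow (k : nat) : G := if k is k'.+1 then gmul (gen_a_pow k') gen_a else g1.

Lemma fred_nseq_a k : fred (nseq k (a_, false)) = nseq k (a_, false).
Proof. by elim: k => [//|k IHk] /=; rewrite IHk; case: k {IHk}. Qed.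

Lemma val_gen_a_pow k : val (gen_a_pow k) = (nseq k (a_, false), 0%R).
Proof.
elim: k => [//|k IHk] /=; rewrite /gmul /= IHk /=.
by rewrite -[[:: _]]/(nseq 1 (a_, false)) -nseqD addn1 fred_nseq_a.
Qed.

Section GLHom.
Variables (F : fieldType) (n : nat) (phi : G -> 'M[F]_n.+1).
Hypothesis phi_hom : GL_hom phi.

Lemma GL_hom1 : phi g1 = 1.
Proof.
have [phi_unit phiM] := phi_hom.
by rewrite -[LHS](mulKmx (phi_unit g1)) -phiM gmul_g1g1 mulVmx.
Qed.

Lemma GL_hom_gen_a_pow k : phi (gen_a_pow k) = phi gen_a ^+ k.
Proof.
have [_ phiM] := phi_hom.
by elim: k => [|k IHk] /=; rewrite ?GL_hom1 // phiM IHk exprSr mulmxE.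
Qed.
End GLHom.

Theorem corollary6p4 (F : fieldType) (p : nat) (hp : (p \in [pchar F])%R)
    (d : nat) (hd : (0 < d)%N) :
  ~ exists phi : G -> 'M[F]_d, GL_hom phi /\ injective phi.
Proof.
case: d hd => [//|n] _ [phi [phi_hom phi_inj]]; have [phi_unit phiM] := phi_hom.
have [N N_gt0 aN] : exists2 N, (0 < N)%N & phi gen_a ^+ N = 1.
  apply: (char_poly_shift_torsion hp (phi_unit gen_t)).
  - by rewrite /comm_mx -!phiM gersten_rel_a.
  - by apply: (char_poly_similar (phi_unit gen_b)); rewrite mulmxA -!phiM gersten_rel_b.
  - by apply: (char_poly_similar (phi_unit gen_c)); rewrite !mulmxA -!phiM gersten_rel_c.
have : gen_a_pow N = g1 by apply: phi_inj; rewrite GL_hom_gen_a_pow // aN GL_hom1.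
by move/(congr1 val); rewrite val_gen_a_pow; case: N N_gt0 {aN}.
Qed.
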